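(* Let $m\ge 2$ and $\alpha\in[0,1]$. Every deterministic voting rule $f$ that takes ranked preferences with intensities as input satisfies, under mandatory elicitation of the intensities, $$\mathsf{dist}_\alpha(f)\ge 1+2\,\frac{1-\alpha^{\lfloor m/2\rfloor}}{1+\alpha^{\lfloor m/2\rfloor}}.$$
   Context: An election $\mathcal E=(N,A,\vec\sigma)$ has a finite set $N$ of $n$ agents, a set $A$ of $m$ alternatives, and a profile $\vec\sigma=(\sigma_1,\dots,\sigma_n)$. Each $\sigma_i=(\pi_i,\Join_i)$ consists of a bijection $\pi_i:[m]\to A$, where $\pi_i(1)$ is agent $i$'s most preferred alternative, and a map $\Join_i:[m-1]\to\{\succ,\succ\!\!\succ\}$ recording strong ($\succ\!\!\succ$) or ordinary ($\succ$) preference between consecutive alternatives. A metric $d$ on $N\cup A$ is nonnegative and symmetric, satisfies the triangle inequality, and has $d(x,x)=0$. For $\alpha\in[0,1]$, the profile $\vec\sigma$ is $\alpha$-consistent with $d$ under mandatory elicitation if for every agent $i$ and every $j\in[m-1]$: - if $\Join_i(j)=\,\succ$, then $d(i,\pi_i(j+1))\ge d(i,\pi_i(j))>\alpha\, d(i,\pi_i(j+1))$; - if $\Join_i(j)=\,\succ\!\!\succ$, then $d(i,\pi_i(j))\le \alpha\, d(i,\pi_i(j+1))$. Let $\mathrm{sc}_d(a)=\sum_{i\in N}d(i,a)$. Define $\mathsf{dist}_\alpha(a,\mathcal E)=\sup_d \mathrm{sc}_d(a)/\min_{b\in A}\mathrm{sc}_d(b)$ over such $\alpha$-consistent metrics $d$.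 For a deterministic voting rule $f$ (mapping any profile over the $m$ alternatives to an alternative), $\mathsf{dist}_\alpha(f)=\sup_{\mathcal E}\mathsf{dist}_\alpha(f(\vec\sigma),\mathcal E)$ over all elections with $m$ alternatives. *)

From HB Require Import structures.
From mathcomp Require Import all_boot all_order all_algebra all_fingroup.
From mathcomp Require Import all_reals.
Set Implicit Arguments. Unset Strict Implicit. Unset Printing Implicit Defensive.
Import Order.TTheory GRing.Theory Num.Theory.
Local Open Scope ring_scope.

(* A ballot over the alternatives A = 'I_m: a bijection pi : positions -> alternatives
   (position 0 = most preferred, i.e. pi(1) in the paper's 1-indexed notation) and an
   intensity map on the m-1 consecutive gaps: true = strong (>>), false = ordinary (>). *)
Record ballot (m : nat) := Ballot {
  bperm : {perm 'I_m};
  bstrong : {ffun 'I_m.-1 -> bool} }.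

Definition profile (m n : nat) := 'I_n -> ballot m.

Definition voting_rule (m : nat) := forall n : nat, profile m n -> 'I_m.

Definition pt (n m : nat) := ('I_n + 'I_m)%type.

Definition is_metric (R : realType) (T : Type) (d : T -> T -> R) : Prop :=
  (forall x y, 0 <= d x y) /\ (forall x y, d x y = d y x) /\
  (forall x y z, d x z <= d x y + d y z) /\ (forall x, d x x = 0).

Definition alpha_consistent (R : realType) (alpha : R) (m n : nat)
    (sigma : profile m n) (d : pt n m -> pt n m -> R) : Prop :=
  forall (i : 'I_n) (j : 'I_m.-1) (k1 k2 : 'I_m),
    val k1 = val j -> val k2 = (val j).+1 ->
    let a1 := bperm (sigma i) k1 in
    let a2 := bperm (sigma i) k2 in
    if bstrong (sigma i) j
    then d (inl i) (inr a1) <= alpha * d (inl i) (inr a2)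
    else (d (inl i) (inr a1) <= d (inl i) (inr a2)) &&
         (alpha * d (inl i) (inr a2) < d (inl i) (inr a1)).

Definition sc (R : realType) (n m : nat) (d : pt n m -> pt n m -> R) (a : 'I_m) : R :=
  \sum_(i < n) d (inl i) (inr a).

(* Two voters with opposite rankings: the alternative w chosen by the rule has
   rank at least m/2 in the ballot of one of them, say B.  All preferences being
   ordinary, B's distances may grow geometrically with any ratio r > alpha, from
   s = r^(m/2) at her favourite to 1 at w, while the other voter sits at distance
   (1 - s)/2 from every alternative.  B's favourite then costs (1 + s)/2 and w
   costs (3 - s)/2, a ratio that tends to the bound as r decreases to alpha.
   For alpha = 1 the bound is 1, attained with all preferences strong and all
   distances equal. *)
From HB Require Import structures.
From mathcomp Require Import all_boot all_order all_algebra all_fingroup.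
From mathcomp Require Import all_reals.
From mathcomp Require Import ring lra zify.
Set Implicit Arguments. Unset Strict Implicit. Unset Printing Implicit Defensive.
Import Order.TTheory GRing.Theory Num.Theory.
Local Open Scope ring_scope.

Section SupDistance.
Variables (R : realType) (I : finType).
Implicit Types F G H : I -> R.

Definition supdist F G : R := \big[Order.max/0]_i `|F i - G i|.

Lemma supdist_ge F G i : `|F i - G i| <= supdist F G.
Proof. exact: le_bigmax. Qed.

Lemma supdist_le F G (c : R) :
  0 <= c -> (forall i, `|F i - G i| <= c) -> supdist F G <= c.
Proof. by move=> c0 Fc; apply: bigmax_le. Qed.

Lemma supdist_ge0 F G : 0 <= supdist F G.
Proof. exact: bigmax_ge_id. Qed.

Lemma supdistC F G : supdist F G = supdist G F.
Proof. by rewrite /supdist; apply: eq_bigr => i _; rewrite distrC. Qed.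

Lemma supdistxx F : supdist F F = 0.
Proof. by apply: bigmax_eq_id => i _; rewrite subrr normr0. Qed.

Lemma supdist_triangle F G H : supdist F H <= supdist F G + supdist G H.
Proof.
apply: supdist_le => [|i]; first by rewrite addr_ge0 ?supdist_ge0.
by rewrite (le_trans (ler_distD (G i) _ _)) // lerD ?supdist_ge.
Qed.

End SupDistance.

Section BipartiteMetric.
Variables (R : realType) (N A : finType) (D : N -> A -> R).

(* The smallest extension of [D] to N + A compatible with the triangle
   inequality: rows, resp. columns, of [D] are compared in sup-distance. *)
Definition bipartite_metric (u v : N + A) : R :=
  match u, v with
  | inl i, inl j => supdist (D i) (D j)
  | inr a, inr b => supdist (D^~ a) (D^~ b)
  | inl i, inr a | inr a, inl i => D i a
  end.

Hypothesis D_ge0 : forall i a, 0 <= D i a.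
Hypothesis D_quadrilateral : forall i j a b, D i a <= D i b + D j b + D j a.

Lemma bipartite_metric_is_metric : is_metric bipartite_metric.
Proof.
split; [|split; [|split]].
- by case=> [i|a] [j|b] //=; apply: supdist_ge0.
- by case=> [i|a] [j|b] //=; apply: supdistC.
- case=> [i|a] [j|b] [k|c] /=; try exact: supdist_triangle.
  + have := supdist_ge (D i) (D j) c; have := ler_norm (D i c - D j c); lra.
  + apply: supdist_le => [|x]; first by rewrite addr_ge0.
    rewrite ler_norml; have := D_quadrilateral i k x b.
    by have := D_quadrilateral k i x b; move=> *; apply/andP; split; lra.
  + have := supdist_ge (D^~ b) (D^~ c) i; have := ler_norm (D i c - D i b).
    rewrite distrC /=; lra.
  + have := supdist_ge (D j) (D k) a; have := ler_norm (D k a - D j a).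
    rewrite distrC; lra.
  + apply: supdist_le => [|l]; first by rewrite addr_ge0.
    rewrite ler_norml; have := D_quadrilateral l j a c.
    by have := D_quadrilateral l j c a; move=> *; apply/andP; split; lra.
  + have := supdist_ge (D^~ a) (D^~ b) k; have := ler_norm (D k a - D k b) => /=; lra.
- by case=> [i|a] /=; apply: supdistxx.
Qed.

End BipartiteMetric.

Section PowerContinuity.
Variable R : realType.

Lemma subrXX_le_mul (a r : R) n :
  0 <= a -> a <= r -> r <= 1 -> r ^+ n - a ^+ n <= n%:R * (r - a).
Proof.
move=> a0 ar r1; elim: n => [|n IHn]; first by rewrite !expr0 subrr mul0r.
have an_le_rn : a ^+ n <= r ^+ n by apply: lerXn2r; rewrite ?nnegrE //; lra.
have an_le1 : a ^+ n <= 1 by rewrite exprn_ile1 //; lra.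
have an_ge0 : 0 <= a ^+ n by rewrite exprn_ge0.
rewrite !exprS -addn1 natrD; nra.
Qed.

Lemma exists_gt_expr_near (a e : R) K :
  0 <= a -> a < 1 -> 0 < e -> exists2 r, a < r < 1 & r ^+ K < a ^+ K + e.
Proof.
move=> a0 a1 e0; set del := Order.min ((1 - a) / 2) (e / K.+1%:R).
have del_gt0 : 0 < del by rewrite lt_min !divr_gt0 ?ltr0Sn //; lra.
have del_le : del <= (1 - a) / 2 by rewrite ge_min lexx.
have Kdel_lt : K%:R * del < e.
  set q := e / K.+1%:R.
  have KSq : K%:R * q + q = e.
    by rewrite -{2}[q]mul1r -mulrDl natr1 mulrC divfK ?pnatr_eq0.
  have : K%:R * del <= K%:R * q by rewrite ler_wpM2l // ge_min lexx orbT.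
  have : 0 < q by rewrite divr_gt0 ?ltr0Sn.
  lra.
exists (a + del); first by apply/andP; split; lra.
have := @subrXX_le_mul a (a + del) K a0 ltac:(lra) ltac:(lra).
rewrite addrAC subrr add0r; lra.
Qed.

Lemma exists_gt_ratio_bound (a c : R) K : 0 <= a -> a < 1 ->
  c * (1 + a ^+ K) < 3 - a ^+ K ->
  exists2 r, a < r < 1 & c * (1 + r ^+ K) < 3 - r ^+ K.
Proof.
move=> a0 a1 hc; set g := 3 - c - (1 + c) * a ^+ K.
have g_gt0 : 0 < g by rewrite /g; lra.
set e := g / (`|1 + c| + 1).
have eE : e * (`|1 + c| + 1) = g by rewrite divfK // gt_eqF // ltr_pwDr.
have e_gt0 : 0 < e by rewrite divr_gt0 // ltr_pwDr.
have [r /andP[ar r1] rK] := exists_gt_expr_near K a0 a1 e_gt0.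
exists r; first by rewrite ar r1.
have aK_le_rK : a ^+ K <= r ^+ K by apply: lerXn2r; rewrite ?nnegrE //; lra.
have := ler_norm (1 + c); have := ler_norm (- (1 + c)); rewrite normrN.
rewrite /g in eE; nra.
Qed.

End PowerContinuity.

Section Elections.
Variables (R : realType) (m : nat).

Definition rank (b : ballot m) (a : 'I_m) : 'I_m := (bperm b)^-1%g a.

Lemma rank_bperm b k : rank b (bperm b k) = k.
Proof. exact: permK. Qed.

Definition distortion_above (alpha : R) n (sigma : profile m n) (c : R) (w : 'I_m) :=
  exists d : pt n m -> pt n m -> R,
    is_metric d /\ alpha_consistent alpha sigma d /\
    exists b0 : 'I_m, (forall b : 'I_m, sc d b0 <= sc d b) /\ c * sc d b0 < sc d w.

Lemma alpha_consistent_ordinary (alpha : R) n (sigma : profile m n) d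
    (g : 'I_n -> nat -> R) :
  (forall i j, ~~ bstrong (sigma i) j) ->
  (forall i k, d (inl i) (inr (bperm (sigma i) k)) = g i k) ->
  (forall i k, g i k <= g i k.+1 /\ alpha * g i k.+1 < g i k) ->
  alpha_consistent alpha sigma d.
Proof.
move=> ordinary dE gaps i j k1 k2 jk1 jk2 /=.
rewrite (negbTE (ordinary i j)) !dE jk1 jk2.
by have [-> ->] := gaps i (val j).
Qed.

Lemma geometric_ordinary_gap (alpha r : R) K k :
  0 <= alpha -> alpha < r -> r < 1 ->
  r ^+ (K - k) <= r ^+ (K - k.+1) /\ alpha * r ^+ (K - k.+1) < r ^+ (K - k).
Proof.
move=> a0 ar r1; have [kK|Kk] := ltnP k K.
  rewrite -(subnSK kK) exprS.
  have : 0 < r ^+ (K - k.+1) by rewrite exprn_gt0 //; lra.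
  by split; nra.
have [-> ->] : (K - k = 0 /\ K - k.+1 = 0)%N by lia.
by rewrite expr0; split; lra.
Qed.

Lemma two_voter_distortion (alpha r c : R) K (sigma : profile m 2) (B : 'I_2) w :
  (forall i j, ~~ bstrong (sigma i) j) -> 0 <= alpha -> alpha < r -> r < 1 ->
  (0 < K)%N -> (K <= rank (sigma B) w)%N -> c * (1 + r ^+ K) < 3 - r ^+ K ->
  distortion_above alpha sigma c w.
Proof.
move=> ordinary a0 ar r1 K_gt0 Kw hc.
set s := r ^+ K in hc *; set z := (1 - s) / 2.
pose t x := r ^+ (K - rank (sigma B) x).
pose D i x := if i == B then t x else z.
have s_gt0 : 0 < s by rewrite exprn_gt0 //; lra.
have s_lt1 : s < 1 by rewrite exprn_ilt1 -?lt0n //; lra.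
have t_ge : forall x, s <= t x by move=> x; rewrite ler_wiXn2l ?leq_subr //; lra.
have t_le1 : forall x, t x <= 1 by move=> x; rewrite exprn_ile1 //; lra.
have scE : forall x, sc (bipartite_metric D) x = z + t x.
  move=> x; rewrite /sc /= (bigD1 B) //= /D eqxx addrC; congr (_ + _).
  rewrite (eq_bigr (fun=> z)) => [|i /negbTE -> //].
  by rewrite sumr_const cardC1 card_ord.
exists (bipartite_metric D); split; [|split].
- apply: bipartite_metric_is_metric => [i x|i j x y]; rewrite /D.
    by case: (i == B); have := t_ge x; rewrite /z; lra.
  have := t_ge x; have := t_ge y; have := t_le1 x; have := t_le1 y.
  by case: (i == B); case: (j == B); rewrite /z; lra.
- apply: (alpha_consistent_ordinary (g := fun i k => if i == B then r ^+ (K - k) else z)).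
  + exact: ordinary.
  + by move=> i k /=; rewrite /D; case: eqP => [->|//]; rewrite /t rank_bperm.
  + move=> i k; case: (i == B); first exact: geometric_ordinary_gap.
    by rewrite /z; split; nra.
- have m_gt0 : (0 < m)%N by apply: leq_ltn_trans (ltn_ord w).
  set top := bperm (sigma B) (Ordinal m_gt0).
  have t_top : t top = s by rewrite /t rank_bperm subn0.
  exists top; split.
    by move=> b; rewrite !scE t_top; have := t_ge b; lra.
  have /eqP tw : (K - rank (sigma B) w == 0)%N by rewrite subn_eq0.
  rewrite !scE t_top /t tw expr0 /z.
  have -> : (1 - s) / 2 + s = (1 + s) / 2 by field.
  rewrite mulrA; lra.
Qed.

Lemma strong_profile_distortion n (sigma : profile m n) c w :
  (0 < n)%N -> (forall i j, bstrong (sigma i) j) -> c < 1 ->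
  distortion_above 1 sigma c w.
Proof.
move=> n_gt0 strong c_lt1; pose D (i : 'I_n) (x : 'I_m) : R := 1.
have scE : forall x, sc (bipartite_metric D) x = n%:R.
  by move=> x; rewrite /sc /= sumr_const card_ord.
exists (bipartite_metric D); split; [|split].
- by apply: bipartite_metric_is_metric => *; rewrite /D; lra.
- by move=> i j k1 k2 _ _ /=; rewrite strong /D mul1r.
- exists w; split=> [b|]; rewrite !scE //.
  have : 0 < n%:R :> R by rewrite ltr0n.
  nra.
Qed.

Definition ordinary_ballot (p : {perm 'I_m}) : ballot m := Ballot p [ffun=> false].

Definition rev_perm : {perm 'I_m} := perm (@rev_ord_inj m).

Definition opposite_profile : profile m 2 :=
  fun i => ordinary_ballot (if i == ord0 then 1%g else rev_perm).

Lemma opposite_profile_ordinary i j : ~~ bstrong (opposite_profile i) j.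
Proof. by rewrite ffunE. Qed.

Lemma opposite_profile_low_rank w : exists B, (m./2 <= rank (opposite_profile B) w)%N.
Proof.
have [Kw|wK] := leqP m./2 w; first by exists ord0; rewrite /rank /= invg1 perm1.
exists ord_max; have -> : rank (opposite_profile ord_max) w = rev_ord w.
  by apply: (canLR (permK _)); rewrite /= permE rev_ordK.
by move: wK (ltn_ord w); rewrite /= -divn2; lia.
Qed.

End Elections.

Lemma distortion_bound_ltE (R : realType) (x c : R) : 0 <= x ->
  (c < 1 + 2 * ((1 - x) / (1 + x))) = (c * (1 + x) < 3 - x).
Proof.
move=> x0; have x1 : 0 < 1 + x by lra.
rewrite -(ltr_pM2r x1) mulrDl mul1r -mulrA divfK ?gt_eqF //.
by congr (_ < _); ring.
Qed.

Theorem lemma1 (R : realType) (m : nat) (alpha : R) :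
  (2 <= m)%N -> 0 <= alpha -> alpha <= 1 ->
  forall f : voting_rule m, forall c : R,
    c < 1 + 2 * ((1 - alpha ^+ m./2) / (1 + alpha ^+ m./2)) ->
    exists (n : nat) (sigma : profile m n) (d : pt n m -> pt n m -> R),
      is_metric d /\ alpha_consistent alpha sigma d /\
      exists b0 : 'I_m, (forall b : 'I_m, sc d b0 <= sc d b) /\
        c * sc d b0 < sc d (f n sigma).
Proof.
move=> m_ge2 a0; rewrite le_eqVlt => /predU1P[-> | a_lt1] f c.
  rewrite expr1n subrr mul0r mulr0 addr0 => c_lt1.
  exists 1%N, (fun=> Ballot 1%g [ffun=> true]).
  by apply: strong_profile_distortion => // i j; rewrite ffunE.
rewrite distortion_bound_ltE ?exprn_ge0 // => hc.
have [r /andP[ar r1] hr] := exists_gt_ratio_bound a0 a_lt1 hc.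
have K_gt0 : (0 < m./2)%N by rewrite -divn2; lia.
exists 2%N, (opposite_profile m).
have [B hB] := opposite_profile_low_rank (f 2%N (opposite_profile m)).
exact: (two_voter_distortion (@opposite_profile_ordinary m) a0 ar r1 K_gt0 hB hr).
Qed.
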